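(* Let $\mathcal G=(N,\Sigma,S,P)$ be a normalized spine grammar with spine direction $d$. Then $\pi(\mathcal F(\mathcal S(\mathcal G))_S)=T(\mathcal G)$, where $\pi$ is the relabeling with $\pi(\alpha_n)=\alpha$ and $\pi\bigl(\tfrac{\sigma}{n_1\ n_2}\bigr)=\sigma$ for all $\alpha\in\Sigma_0$, $\sigma\in\Sigma_2$, $n,n_1,n_2\in N$.
   Context: sCFTG/spine grammar: $\mathcal G=(N,\Sigma,S,P)$, $N=N_0\cup N_1$ (nullary/unary nonterminals), terminals $\Sigma=\Sigma_0\cup\Sigma_2$, $S\in N_0$; productions rewrite nullary nonterminals to trees and unary nonterminals to contexts (trees with one hole $\Box$); $T(\mathcal G)$ is the set of terminal trees derivable from $S$. Spine direction $d:\Sigma_2\to\{1,2\}$: in every production for a unary nonterminal, the path from the root to $\Box$ passes from each $\sigma\in\Sigma_2$ on it into child $d(\sigma)$. Normalized: every production is of the form $n\to\alpha$ or $n\to b(\alpha)$ ($n\in N_0$, $b\in N_1$, $\alpha\in\Sigma_0$), $n\to b_1(b_2(\Box))$ ($b_1,b_2\in N_1$), or $n\to\sigma(\Box,a)$ / $n\to\sigma(a,\Box)$ ($\sigma\in\Sigma_2$, $a\in N_0\setminus\{S\}$); and for each $n\in N_0$ no tree derivable from $n$ by one step followed by steps using only productions for unary nonterminals contains $n$. Notation: $n_g=(n,g)\in N^2$, $\alpha_n=(\alpha,n)\in\Sigma_0\times N$, $\frac{\sigma}{n_1\ n_2}=(\sigma,n_1,n_2)\in\Sigma_2\times N^2$.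 Spines: $\mathcal S(\mathcal G)=L(\mathcal G')$ for the CFG $\mathcal G'$ with nonterminals $\{\top\}\cup N^2$ ($\top\notin N$), start $\top$, terminals $(\Sigma_0\times N)\cup(\Sigma_2\times N^2)$ and productions: $\top\to\alpha_n$ for each $(n\to\alpha)\in P$; $\top\to\alpha_n\,b_n$ for each $(n\to b(\alpha))\in P$; for all $g\in N$: $n_g\to b'_g\,b_g$ for each $(n\to b(b'(\Box)))\in P$; $n_g\to\frac{\sigma}{g\ n'}$ for each $(n\to\sigma(\Box,n'))\in P$; $n_g\to\frac{\sigma}{n'\ g}$ for each $(n\to\sigma(n',\Box))\in P$. Reassembly: let $\mathrm{gen}(\alpha_n)=n$ and $\mathrm{gen}(\frac{\sigma}{n_1\ n_2})=n_{d(\sigma)}$. For a set $T$ of trees with binary symbols in $\Sigma_2\times N^2$ and leaves in $\Sigma_0\times N$, let $T_n=\{t\in T\mid\mathrm{gen}(\text{root label of }t)=n\}$. For $w\in(\Sigma_0\times N)(\Sigma_2\times N^2)^*$ define $\mathrm{attach}_T(\alpha_n)=\{\alpha_n\}$ and $\mathrm{attach}_T(w\frac{\sigma}{n_1\ n_2})=\{\frac{\sigma}{n_1\ n_2}(t_1,t_2)\mid t_{d(\sigma)}\in\mathrm{attach}_T(w),\ t_{3-d(\sigma)}\in T_{n_{3-d(\sigma)}}\}$. For a language $L\subseteq(\Sigma_0\times N)(\Sigma_2\times N^2)^*$, $\mathcal F(L)$ is the smallest tree language $\mathcal F$ with $\mathrm{attach}_{\mathcal F}(w)\subseteq\mathcal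 F$ for all $w\in L$, and $\mathcal F(L)_S=\{t\in\mathcal F(L)\mid\mathrm{gen}(\text{root label of }t)=S\}$. *)

From Stdlib Require Import List.
Import ListNotations.
Set Implicit Arguments.

Section Spine.
Variables (N Sig0 Sig2 : Type).

Inductive tree : Type :=
| Leaf : Sig0 -> tree
| Node : Sig2 -> tree -> tree -> tree.

(* Right-hand sides / sentential forms: trees over Sigma u N u {Box};
   nullary nonterminals are leaves, unary nonterminals have one child. *)
Inductive rtree : Type :=
| RLeaf : Sig0 -> rtree
| RNode : Sig2 -> rtree -> rtree -> rtree
| RNt0  : N -> rtree
| RNt1  : N -> rtree -> rtree
| RHole : rtree.

Fixpoint embed (t : tree) : rtree :=
  match t with
  | Leaf a => RLeaf a
  | Node s l r => RNode s (embed l) (embed r)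
  end.

Fixpoint holes (r : rtree) : nat :=
  match r with
  | RLeaf _ => 0
  | RNode _ l r => holes l + holes r
  | RNt0 _ => 0
  | RNt1 _ t => holes t
  | RHole => 1
  end.

Fixpoint subst_hole (r u : rtree) : rtree :=
  match r with
  | RLeaf a => RLeaf a
  | RNode s l r' => RNode s (subst_hole l u) (subst_hole r' u)
  | RNt0 n => RNt0 n
  | RNt1 n t => RNt1 n (subst_hole t u)
  | RHole => u
  end.

Fixpoint occurs (n : N) (r : rtree) : Prop :=
  match r with
  | RLeaf _ => False
  | RNode _ l r' => occurs n l \/ occurs n r'
  | RNt0 m => m = n
  | RNt1 m t => m = n \/ occurs n t
  | RHole => False
  end.

Record grammar : Type := Grammar {
  unary : N -> bool;               (* true: n in N1, false: n in N0 *)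
  start : N;
  prods : list (N * rtree)
}.

Variable G : grammar.

Fixpoint arity_ok (r : rtree) : Prop :=
  match r with
  | RLeaf _ => True
  | RNode _ l r' => arity_ok l /\ arity_ok r'
  | RNt0 m => unary G m = false
  | RNt1 m t => unary G m = true /\ arity_ok t
  | RHole => True
  end.

Definition is_sCFTG : Prop :=
  unary G (start G) = false /\
  forall n r, In (n, r) (prods G) ->
    arity_ok r /\ holes r = (if unary G n then 1 else 0).

Inductive dir : Type := D1 | D2.

Fixpoint spine_path (d : Sig2 -> dir) (r : rtree) : Prop :=
  match r with
  | RLeaf _ => True
  | RNode s l r' =>
      (holes l > 0 -> d s = D1) /\ (holes r' > 0 -> d s = D2) /\
      spine_path d l /\ spine_path d r'
  | RNt0 _ => True
  | RNt1 _ t => spine_path d t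
  | RHole => True
  end.

Definition spine_direction (d : Sig2 -> dir) : Prop :=
  forall n r, In (n, r) (prods G) -> unary G n = true -> spine_path d r.

Inductive step (Q : N -> rtree -> Prop) : rtree -> rtree -> Prop :=
| st_nt0 n r : unary G n = false -> Q n r -> step Q (RNt0 n) r
| st_nt1 n r t : unary G n = true -> Q n r -> step Q (RNt1 n t) (subst_hole r t)
| st_node_l s l l' r : step Q l l' -> step Q (RNode s l r) (RNode s l' r)
| st_node_r s l r r' : step Q r r' -> step Q (RNode s l r) (RNode s l r')
| st_arg n t t' : step Q t t' -> step Q (RNt1 n t) (RNt1 n t').

Inductive star (A : Type) (R : A -> A -> Prop) : A -> A -> Prop :=
| star_refl x : star R x x
| star_step x y z : R x y -> star R y z -> star R x z.

Definition allP (n : N) (r : rtree) : Prop := In (n, r) (prods G).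
Definition unaryP (n : N) (r : rtree) : Prop := unary G n = true /\ In (n, r) (prods G).

Definition lang (t : tree) : Prop := star (step allP) (RNt0 (start G)) (embed t).

Definition normal_form (n : N) (r : rtree) : Prop :=
  (unary G n = false /\ exists a, r = RLeaf a) \/
  (unary G n = false /\ exists b a, unary G b = true /\ r = RNt1 b (RLeaf a)) \/
  (exists b1 b2, unary G b1 = true /\ unary G b2 = true /\ r = RNt1 b1 (RNt1 b2 RHole)) \/
  (exists s a, unary G a = false /\ a <> start G /\ r = RNode s RHole (RNt0 a)) \/
  (exists s a, unary G a = false /\ a <> start G /\ r = RNode s (RNt0 a) RHole).

Definition normalized : Prop :=
  (forall n r, In (n, r) (prods G) -> normal_form n r) /\
  (forall n t1 t2, unary G n = false ->
     step allP (RNt0 n) t1 -> star (step unaryP) t1 t2 -> ~ occurs n t2).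

Inductive sym : Type :=
| SLeaf : Sig0 -> N -> sym
| SBin  : Sig2 -> N -> N -> sym.

(* nonterminals {top} u N^2 : None = top, Some (n, g) = n_g *)
Definition cnt := option (N * N).

Definition spine_prod (A : cnt) (rhs : list (sym + cnt)) : Prop :=
  match A with
  | None =>
      (exists n a, In (n, RLeaf a) (prods G) /\ rhs = [inl (SLeaf a n)]) \/
      (exists n b a, In (n, RNt1 b (RLeaf a)) (prods G) /\
                     rhs = [inl (SLeaf a n); inr (Some (b, n))])
  | Some (n, g) =>
      (exists b b', In (n, RNt1 b (RNt1 b' RHole)) (prods G) /\
                    rhs = [inr (Some (b', g)); inr (Some (b, g))]) \/
      (exists s n', In (n, RNode s RHole (RNt0 n')) (prods G) /\
                    rhs = [inl (SBin s g n')]) \/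
      (exists s n', In (n, RNode s (RNt0 n') RHole) (prods G) /\
                    rhs = [inl (SBin s n' g)])
  end.

Inductive cfg_step : list (sym + cnt) -> list (sym + cnt) -> Prop :=
| cstep u v A alpha : spine_prod A alpha ->
    cfg_step (u ++ [inr A] ++ v) (u ++ alpha ++ v).

Definition spines (w : list sym) : Prop :=
  star cfg_step [inr None] (map inl w).

Inductive stree : Type :=
| SL : Sig0 -> N -> stree
| SN : Sig2 -> N -> N -> stree -> stree -> stree.

Variable d : Sig2 -> dir.

Definition gen (t : stree) : N :=
  match t with
  | SL _ n => n
  | SN s n1 n2 _ _ => match d s with D1 => n1 | D2 => n2 end
  end.

Inductive attach (T : stree -> Prop) : list sym -> stree -> Prop :=
| at_leaf a n : attach T [SLeaf a n] (SL a n)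
| at_bin1 w s n1 n2 t1 t2 : d s = D1 ->
    attach T w t1 -> T t2 -> gen t2 = n2 ->
    attach T (w ++ [SBin s n1 n2]) (SN s n1 n2 t1 t2)
| at_bin2 w s n1 n2 t1 t2 : d s = D2 ->
    attach T w t2 -> T t1 -> gen t1 = n1 ->
    attach T (w ++ [SBin s n1 n2]) (SN s n1 n2 t1 t2).

(* F(L): the smallest tree language F with attach_F(w) included in F for all w in L *)
Definition reassemble (L : list sym -> Prop) (t : stree) : Prop :=
  forall F : stree -> Prop,
    (forall w u, L w -> attach F w u -> F u) -> F t.

Fixpoint relabel (t : stree) : tree :=
  match t with
  | SL a _ => Leaf a
  | SN s _ _ l r => Node s (relabel l) (relabel r)
  end.
End Spine.

Definition finite_type (X : Type) : Prop := exists l : list X, forall x, In x l.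

From Stdlib Require Import List Arith Lia.
Import ListNotations.
Set Implicit Arguments.
Unset Strict Implicit.

(* A derivation of a terminal tree from a nullary nonterminal n starts with
   n -> alpha or n -> b(alpha).  Unfolding b through the productions
   b -> b1(b2(Box)) down to the productions b' -> sigma(Box, n') and
   b' -> sigma(n', Box) yields the spine of the tree, and the word alpha_n
   followed by the symbols sigma/(n n') resp. sigma/(n' n) read off this
   unfolding is exactly a word of the spine grammar; the side subtrees are
   derived from the nullary nonterminals n' and are again reassembled
   spines.  Hence soundness follows by induction on the least fixed point
   F(S(G)), and completeness by induction on big-step derivations, carrying
   for every unary nonterminal the spine word it contributes. *)

#[local] Arguments Leaf {Sig0 Sig2}.
#[local] Arguments RLeaf {N Sig0 Sig2}.
#[local] Arguments RNt0 {N Sig0 Sig2}.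
#[local] Arguments RHole {N Sig0 Sig2}.
#[local] Arguments embed {N Sig0 Sig2}.
#[local] Arguments SLeaf {N Sig0 Sig2}.
#[local] Arguments SBin {N Sig0 Sig2}.
#[local] Arguments SL {N Sig0 Sig2}.

Lemma star_trans (A : Type) (R : A -> A -> Prop) x y z :
  star R x y -> star R y z -> star R x z.
Proof. induction 1; [easy | intros; econstructor; eauto]. Qed.

Lemma star_map (A B : Type) (R : A -> A -> Prop) (R' : B -> B -> Prop) (f : A -> B) :
  (forall x y, R x y -> R' (f x) (f y)) -> forall x y, star R x y -> star R' (f x) (f y).
Proof. intros Hf x y; induction 1; [constructor | econstructor; eauto]. Qed.

Section SpineGrammar.
Variables (N Sig0 Sig2 : Type) (G : grammar N Sig0 Sig2).

Local Notation rtree := (rtree N Sig0 Sig2).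
Local Notation tree := (tree Sig0 Sig2).
Local Notation sym := (sym N Sig0 Sig2).
Local Notation stree := (stree N Sig0 Sig2).

(** * Big-step derivations *)

Inductive derives : rtree -> tree -> Prop :=
| derives_leaf a : derives (RLeaf a) (Leaf a)
| derives_node s l r tl tr :
    derives l tl -> derives r tr -> derives (RNode s l r) (Node s tl tr)
| derives_nt0 n r t :
    unary G n = false -> In (n, r) (prods G) -> derives r t -> derives (RNt0 n) t
| derives_nt1 n r x t :
    unary G n = true -> In (n, r) (prods G) -> derives (subst_hole r x) t ->
    derives (RNt1 n x) t.

Lemma derives_embed t : derives (embed t) t.
Proof. induction t; constructor; auto. Qed.

Lemma derives_star x t : derives x t -> star (step G (allP G)) x (embed t).
Proof.
  induction 1; simpl.
  - constructor.
  - apply star_trans with (RNode s (embed tl) r).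
    + apply star_map with (R := step G (allP G)) (f := fun z => RNode s z r); auto.
      now constructor.
    + apply star_map with (R := step G (allP G)) (f := fun z => RNode s (embed tl) z); auto.
      now constructor.
  - econstructor; [constructor; eauto | auto].
  - econstructor; [constructor; eauto | auto].
Qed.

Lemma subst_hole_assoc (q r x : rtree) :
  subst_hole q (subst_hole r x) = subst_hole (subst_hole q r) x.
Proof. induction q; simpl; congruence. Qed.

Lemma derives_subst_hole x x' :
  (forall t, derives x' t -> derives x t) ->
  forall r t, derives (subst_hole r x') t -> derives (subst_hole r x) t.
Proof.
  intros Hx r t H; remember (subst_hole r x') as y eqn:E; revert r E.
  induction H; intros [] E; simpl in E; try discriminate;
    try (apply Hx; rewrite <- E; econstructor; eauto; fail).
  - injection E as ->; constructor.
  - injection E as -> -> ->; constructor; auto.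
  - injection E as ->; econstructor; eauto.
  - injection E as -> ->; econstructor; eauto.
    rewrite subst_hole_assoc; apply IHderives; now rewrite subst_hole_assoc.
Qed.

Lemma step_derives x y t : step G (allP G) x y -> derives y t -> derives x t.
Proof.
  intros H; revert t; induction H; intros T HT.
  - econstructor; eauto.
  - econstructor; eauto.
  - inversion HT; subst; constructor; auto.
  - inversion HT; subst; constructor; auto.
  - inversion HT; subst; econstructor; eauto.
    eapply derives_subst_hole; eauto.
Qed.

Lemma star_step_iff_derives x t : star (step G (allP G)) x (embed t) <-> derives x t.
Proof.
  split; [|apply derives_star].
  remember (embed t) as e; induction 1; subst.
  - apply derives_embed.
  - eapply step_derives; eauto.
Qed.

(** * The language of the spine grammar *)

(* The terminal words derivable from the nonterminal [b_g] of the spine grammar. *)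
Inductive chain_word : N -> N -> list sym -> Prop :=
| chain_comp b b1 b2 g v1 v2 :
    In (b, RNt1 b1 (RNt1 b2 RHole)) (prods G) ->
    chain_word b2 g v1 -> chain_word b1 g v2 -> chain_word b g (v1 ++ v2)
| chain_left b s n' g :
    In (b, RNode s RHole (RNt0 n')) (prods G) -> chain_word b g [SBin s g n']
| chain_right b s n' g :
    In (b, RNode s (RNt0 n') RHole) (prods G) -> chain_word b g [SBin s n' g].

Inductive spine_word : list sym -> Prop :=
| spine_leaf n a : In (n, RLeaf a) (prods G) -> spine_word [SLeaf a n]
| spine_chain n b a v :
    In (n, RNt1 b (RLeaf a)) (prods G) -> chain_word b n v -> spine_word (SLeaf a n :: v).

Definition symbol_lang (X : sym + cnt N) (w : list sym) : Prop :=
  match X with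
  | inl x => w = [x]
  | inr None => spine_word w
  | inr (Some (b, g)) => chain_word b g w
  end.

Definition form_lang (z : list (sym + cnt N)) (w : list sym) : Prop :=
  exists ws, Forall2 symbol_lang z ws /\ w = concat ws.

Lemma spine_prod_symbol_lang A alpha ws :
  spine_prod G A alpha -> Forall2 symbol_lang alpha ws -> symbol_lang (inr A) (concat ws).
Proof.
  intros HA Hws; destruct A as [[n g]|]; simpl in HA;
    repeat match goal with
    | H : _ \/ _ |- _ => destruct H
    | H : exists _, _ |- _ => destruct H
    | H : _ /\ _ |- _ => destruct H
    end; subst;
    repeat match goal with H : Forall2 _ (_ :: _) _ |- _ => inversion_clear H end;
    match goal with H : Forall2 _ [] _ |- _ => inversion_clear H end;
    simpl in *; subst; simpl; rewrite ?app_nil_r; econstructor; eauto.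
Qed.

Lemma cfg_step_form_lang z z' w : cfg_step G z z' -> form_lang z' w -> form_lang z w.
Proof.
  intros [u v A alpha HA] (ws & Hws & ->).
  apply Forall2_app_inv_l in Hws as (wu & wr & Hu & Hr & ->).
  apply Forall2_app_inv_l in Hr as (wa & wv & Ha & Hv & ->).
  exists (wu ++ [concat wa] ++ wv); split.
  - apply Forall2_app; [assumption|].
    constructor; [apply spine_prod_symbol_lang with alpha | ]; assumption.
  - now rewrite !concat_app; simpl; rewrite app_nil_r.
Qed.

Lemma cfg_step_single A alpha : spine_prod G A alpha -> cfg_step G [inr A] alpha.
Proof. intros H; pose proof (cstep G [] [] A alpha H) as Hs; now rewrite !app_nil_r in Hs. Qed.

Lemma cfg_star_app p q x y :
  star (cfg_step G) x y -> star (cfg_step G) (p ++ x ++ q) (p ++ y ++ q).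
Proof.
  induction 1 as [|x y z [u v A alpha HA]]; [constructor|].
  econstructor; [|eassumption].
  rewrite !app_assoc, <- !(app_assoc (p ++ u)), <- !(app_assoc _ v).
  now constructor.
Qed.

Lemma chain_word_star b g v :
  chain_word b g v -> star (cfg_step G) [inr (Some (b, g))] (map inl v).
Proof.
  induction 1 as [b b1 b2 g v1 v2 Hin _ IH1 _ IH2| |].
  - econstructor.
    { apply cfg_step_single; left; exists b1, b2; split; [exact Hin | reflexivity]. }
    rewrite map_app.
    apply star_trans with (map inl v1 ++ [inr (Some (b1, g))]).
    + exact (cfg_star_app [] [inr (Some (b1, g))] IH1).
    + apply (cfg_star_app (map inl v1) []) in IH2; now rewrite !app_nil_r in IH2.
  - econstructor; [apply cfg_step_single; right; left; eauto | constructor].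
  - econstructor; [apply cfg_step_single; right; right; eauto | constructor].
Qed.

Lemma form_lang_terminals w : form_lang (map inl w) w.
Proof.
  exists (map (fun x => [x]) w); split.
  - induction w; constructor; simpl; auto.
  - induction w; simpl; congruence.
Qed.

Lemma star_form_lang z w : star (cfg_step G) z (map inl w) -> form_lang z w.
Proof.
  remember (map inl w) as e eqn:E; induction 1; subst.
  - apply form_lang_terminals.
  - eapply cfg_step_form_lang; eauto.
Qed.

Lemma spines_iff_spine_word w : spines G w <-> spine_word w.
Proof.
  split.
  - intros Hw; apply star_form_lang in Hw as (ws & Hws & ->).
    inversion_clear Hws as [|? ? ? ? Hw Hnil]; inversion_clear Hnil.
    simpl; now rewrite app_nil_r.
  - intros [n a Hin | n b a v Hin Hv].
    + econstructor; [apply cfg_step_single; left; eauto | constructor].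
    + econstructor; [apply cfg_step_single; right; exists n, b, a; eauto|].
      pose proof (cfg_star_app [inl (SLeaf a n)] [] (chain_word_star Hv)) as H.
      now rewrite !app_nil_r in H.
Qed.

(** * Attaching side trees along a spine *)

Variable d : Sig2 -> dir.

Section Attach.
Variable F : stree -> Prop.

Inductive attach_step : stree -> sym -> stree -> Prop :=
| attach_step1 t s n1 n2 t2 : d s = D1 -> F t2 -> gen d t2 = n2 ->
    attach_step t (SBin s n1 n2) (SN s n1 n2 t t2)
| attach_step2 t s n1 n2 t1 : d s = D2 -> F t1 -> gen d t1 = n1 ->
    attach_step t (SBin s n1 n2) (SN s n1 n2 t1 t).

(* [attach] read upwards along the spine from an arbitrary start tree, so
   that spine segments compose. *)
Inductive attach_from : stree -> list sym -> stree -> Prop :=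
| attach_from_nil t : attach_from t [] t
| attach_from_cons t x t' v u :
    attach_step t x t' -> attach_from t' v u -> attach_from t (x :: v) u.

Lemma attach_from_app t v1 t1 v2 u :
  attach_from t v1 t1 -> attach_from t1 v2 u -> attach_from t (v1 ++ v2) u.
Proof. induction 1; simpl; [easy | econstructor; eauto]. Qed.

Lemma attach_from_app_inv t v1 v2 u :
  attach_from t (v1 ++ v2) u -> exists t1, attach_from t v1 t1 /\ attach_from t1 v2 u.
Proof.
  revert t; induction v1 as [|x v1 IH]; simpl; intros t H.
  - exists t; split; [constructor | exact H].
  - inversion_clear H as [|? ? t' ? ? Hx Hv].
    destruct (IH _ Hv) as (t1 & H1 & H2); exists t1; split; [econstructor|]; eauto.
Qed.

Lemma attach_from_single t x u : attach_from t [x] u <-> attach_step t x u.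
Proof.
  split.
  - intros H; inversion_clear H as [|? ? ? ? ? Hx Hnil]; now inversion Hnil; subst.
  - econstructor; [eassumption | constructor].
Qed.

Lemma attach_attach_from w u :
  attach d F w u -> exists a n v, w = SLeaf a n :: v /\ attach_from (SL a n) v u.
Proof.
  induction 1 as [a n | w s n1 n2 t1 t2 Hs _ IH | w s n1 n2 t1 t2 Hs _ IH].
  - exists a, n, []; split; [reflexivity | constructor].
  - destruct IH as (a & n & v & -> & Hv); exists a, n, (v ++ [SBin s n1 n2]).
    split; [reflexivity|]; eapply attach_from_app; [eassumption|].
    now apply attach_from_single; constructor.
  - destruct IH as (a & n & v & -> & Hv); exists a, n, (v ++ [SBin s n1 n2]).
    split; [reflexivity|]; eapply attach_from_app; [eassumption|].
    now apply attach_from_single; constructor.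
Qed.

Lemma attach_iff_attach_from a n v u :
  attach d F (SLeaf a n :: v) u <-> attach_from (SL a n) v u.
Proof.
  split.
  - intros H; destruct (attach_attach_from H) as (a' & n' & v' & E & Hv).
    now injection E as -> -> ->.
  - revert u; induction v as [|x v IH] using rev_ind; intros u H.
    + inversion H; constructor.
    + apply attach_from_app_inv in H as (t1 & H1 & H2).
      apply attach_from_single in H2.
      destruct H2; [apply (@at_bin1 _ _ _ d F (SLeaf a n :: v))
                   | apply (@at_bin2 _ _ _ d F (SLeaf a n :: v))]; auto.
Qed.

End Attach.

(** * Soundness *)

Hypothesis HG : is_sCFTG G.
Hypothesis Hd : spine_direction G d.

Lemma unary_holes n r : In (n, r) (prods G) -> unary G n = (0 <? holes r).
Proof.
  intros Hin; destruct HG as [_ H]; destruct (H n r Hin) as [_ Hh].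
  destruct (unary G n); now rewrite Hh.
Qed.

Lemma spine_dir_left b s r : In (b, RNode s RHole r) (prods G) -> d s = D1.
Proof.
  intros Hin; apply (Hd Hin (unary_holes Hin)); simpl; lia.
Qed.

Lemma spine_dir_right b s r : In (b, RNode s r RHole) (prods G) -> d s = D2.
Proof.
  intros Hin; assert (Hb : unary G b = true)
    by (rewrite (unary_holes Hin); apply Nat.ltb_lt; simpl; lia).
  apply (Hd Hin Hb); simpl; lia.
Qed.

Lemma attach_from_chain_word F b g v t0 u :
  (forall t, F t -> derives (RNt0 (gen d t)) (relabel t)) ->
  chain_word b g v -> attach_from F t0 v u ->
  gen d u = g /\ forall x, derives x (relabel t0) -> derives (RNt1 b x) (relabel u).
Proof.
  intros HF Hv; revert t0 u.
  induction Hv as [b b1 b2 g v1 v2 Hin _ IH1 _ IH2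
                  | b s n' g Hin | b s n' g Hin]; intros t0 u Hu.
  - apply attach_from_app_inv in Hu as (t1 & H1 & H2).
    destruct (IH1 _ _ H1) as [_ D1], (IH2 _ _ H2) as [Hg D2].
    split; [exact Hg|]; intros x Hx.
    eapply derives_nt1; [exact (unary_holes Hin) | exact Hin | simpl; auto].
  - apply attach_from_single in Hu; pose proof (spine_dir_left Hin) as Hs.
    inversion Hu as [? ? ? ? t2 _ Ht2 | ? ? ? ? ? Hs']; subst; [|congruence].
    split; [simpl; now rewrite Hs|]; intros x Hx.
    eapply derives_nt1; [exact (unary_holes Hin) | exact Hin|].
    simpl; constructor; auto.
  - apply attach_from_single in Hu; pose proof (spine_dir_right Hin) as Hs.
    inversion Hu as [? ? ? ? ? Hs' | ? ? ? ? t1 _ Ht1]; subst; [congruence|].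
    split; [simpl; now rewrite Hs|]; intros x Hx.
    eapply derives_nt1; [exact (unary_holes Hin) | exact Hin|].
    simpl; constructor; auto.
Qed.

Lemma reassemble_derives u :
  reassemble d (spines G) u -> derives (RNt0 (gen d u)) (relabel u).
Proof.
  intros Hu; apply Hu; clear u Hu; intros w u Hw.
  apply spines_iff_spine_word in Hw as [n a Hin | n b a v Hin Hv];
    intros Ha; apply attach_iff_attach_from in Ha.
  - inversion Ha; subst.
    eapply derives_nt0; [exact (unary_holes Hin) | exact Hin | constructor].
  - destruct (attach_from_chain_word (fun t Ht => Ht) Hv Ha) as [-> Hder].
    eapply derives_nt0; [exact (unary_holes Hin) | exact Hin | apply Hder; constructor].
Qed.

(** * Completeness *)

Hypothesis Hnf : forall n r, In (n, r) (prods G) -> normal_form G n r.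

Local Notation spine_trees := (reassemble d (spines G)).

Lemma spine_trees_closed w u : spines G w -> attach d spine_trees w u -> spine_trees u.
Proof.
  intros Hw Ha F HF; apply (HF w u Hw); clear Hw.
  induction Ha as [| ? ? ? ? ? ? ? _ ? Ht2 | ? ? ? ? ? ? ? _ ? Ht1];
    [constructor | apply at_bin1 | apply at_bin2]; auto; [apply Ht2 | apply Ht1]; exact HF.
Qed.

(* The invariant carried through a derivation of [T] from [x]: a unary
   nonterminal [b] contributes, for every [g], a word of [b_g] whose
   attachment rebuilds [T] from a reassembly of its argument. *)
Fixpoint reassemblable (x : rtree) (T : tree) : Prop :=
  match x with
  | RLeaf a => T = Leaf a
  | RNode s l r =>
      exists Tl Tr, T = Node s Tl Tr /\ reassemblable l Tl /\ reassemblable r Tr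
  | RNt0 n => exists u, spine_trees u /\ gen d u = n /\ relabel u = T
  | RNt1 b y => forall g, exists v T0,
      chain_word b g v /\ reassemblable y T0 /\
      forall t0, relabel t0 = T0 ->
        exists u, attach_from spine_trees t0 v u /\ relabel u = T
  | RHole => False
  end.

Lemma reassemblable_nt0 n r t :
  unary G n = false -> In (n, r) (prods G) -> reassemblable r t -> reassemblable (RNt0 n) t.
Proof.
  intros Hn Hin Hr; pose proof (unary_holes Hin) as Hh; rewrite Hn in Hh.
  destruct (Hnf Hin) as [(_ & a & ->) | [(_ & b & a & _ & ->) |
    [(b1 & b2 & _ & _ & ->) | [(s & a & _ & _ & ->) | (s & a & _ & _ & ->)]]]];
    simpl in Hh, Hr; try discriminate.
  - exists (SL a n); split; [|split; [reflexivity | now subst]].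
    apply spine_trees_closed with [SLeaf a n]; [|constructor].
    now apply spines_iff_spine_word; constructor.
  - destruct (Hr n) as (v & T0 & Hv & -> & Hext).
    destruct (Hext (SL a n) eq_refl) as (u & Hu & <-).
    exists u; split; [|split; [|reflexivity]].
    + apply spine_trees_closed with (SLeaf a n :: v).
      * now apply spines_iff_spine_word; econstructor; eauto.
      * now apply attach_iff_attach_from.
    + exact (proj1 (attach_from_chain_word reassemble_derives Hv Hu)).
Qed.

Lemma reassemblable_nt1 b r x t :
  unary G b = true -> In (b, r) (prods G) ->
  reassemblable (subst_hole r x) t -> reassemblable (RNt1 b x) t.
Proof.
  intros Hb Hin Hr; pose proof (unary_holes Hin) as Hh; rewrite Hb in Hh.
  destruct (Hnf Hin) as [(_ & a & ->) | [(_ & b' & a & _ & ->) |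
    [(b1 & b2 & _ & _ & ->) | [(s & a & _ & _ & ->) | (s & a & _ & _ & ->)]]]];
    simpl in Hh, Hr |- *; try discriminate; intros g.
  - destruct (Hr g) as (v2 & T1 & Hv2 & Hr1 & Hext2).
    destruct (Hr1 g) as (v1 & T0 & Hv1 & Hx & Hext1).
    exists (v1 ++ v2), T0; split; [econstructor; eauto|]; split; [exact Hx|].
    intros t0 Ht0; destruct (Hext1 t0 Ht0) as (u1 & Hu1 & Hr1').
    destruct (Hext2 u1 Hr1') as (u & Hu2 & <-).
    exists u; split; [eapply attach_from_app|]; eauto.
  - destruct Hr as (Tl & Tr & -> & Hx & u2 & Hu2 & Hg2 & Hr2).
    exists [SBin s g a], Tl; split; [now constructor|]; split; [exact Hx|].
    intros t0 Ht0; exists (SN s g a t0 u2); split.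
    + apply attach_from_single; constructor; auto; exact (spine_dir_left Hin).
    + simpl; congruence.
  - destruct Hr as (Tl & Tr & -> & (u1 & Hu1 & Hg1 & Hr1) & Hx).
    exists [SBin s a g], Tr; split; [now constructor|]; split; [exact Hx|].
    intros t0 Ht0; exists (SN s a g u1 t0); split.
    + apply attach_from_single; constructor; auto; exact (spine_dir_right Hin).
    + simpl; congruence.
Qed.

Lemma derives_reassemblable x t : derives x t -> reassemblable x t.
Proof.
  induction 1.
  - reflexivity.
  - eexists _, _; eauto.
  - eapply reassemblable_nt0; eauto.
  - eapply reassemblable_nt1; eauto.
Qed.

End SpineGrammar.

Theorem theorem6p6 (N Sig0 Sig2 : Type)
  (HN : finite_type N) (HS0 : finite_type Sig0) (HS2 : finite_type Sig2)
  (G : grammar N Sig0 Sig2) (d : Sig2 -> dir) :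
  is_sCFTG G -> spine_direction G d -> normalized G ->
  forall t : tree Sig0 Sig2,
    (exists u : stree N Sig0 Sig2,
        reassemble d (spines G) u /\ gen d u = start G /\ relabel u = t)
    <-> lang G t.
Proof.
  intros HG Hd [Hnf _] t.
  unfold lang; rewrite star_step_iff_derives; split.
  - intros (u & Hu & <- & <-); exact (reassemble_derives HG Hd Hu).
  - intros Hder; exact (derives_reassemblable HG Hd Hnf Hder).
Qed.
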